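(* Let $\beta>0$, $\beta_a>0$, $\alpha>0$ and $x_a\in[0,1]$, let $\Gamma=[0,x_a]\times[0,1-x_a]$, and consider the planar system \[ \frac{di_a}{dt}=F_a(i_a,i_r)\triangleq \beta(x_a-i_a)(i_a+i_r)-\beta_a(x_a-i_a)i_a-\alpha i_a, \qquad \frac{di_r}{dt}=F_r(i_a,i_r)\triangleq \beta(1-x_a-i_r)(i_a+i_r)-\beta_a(x_a-i_a)i_r-\alpha i_r . \] Let $\lambda_+\triangleq\beta-\beta_a x_a-\alpha$. If $\lambda_+\le 0$, then $(0,0)$ is the only isolated equilibrium of the system in $\Gamma$. Moreover, a unique interior equilibrium (a point of $(0,x_a)\times(0,1-x_a)$ at which $F_a=F_r=0$) exists if and only if $\lambda_+>0$.
   Context: An equilibrium is a point $\boldsymbol{i}\in\Gamma$ with $F_a(\boldsymbol{i})=F_r(\boldsymbol{i})=0$; the point $(0,0)$ is called the infection-free equilibrium. *)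

From Stdlib Require Import Reals Lra.
Open Scope R_scope.

Definition Fa (beta beta_a alpha x_a ia ir : R) : R :=
  beta * (x_a - ia) * (ia + ir) - beta_a * (x_a - ia) * ia - alpha * ia.

Definition Fr (beta beta_a alpha x_a ia ir : R) : R :=
  beta * (1 - x_a - ir) * (ia + ir) - beta_a * (x_a - ia) * ir - alpha * ir.

Definition in_Gamma (x_a ia ir : R) : Prop :=
  0 <= ia <= x_a /\ 0 <= ir <= 1 - x_a.

Definition in_interior (x_a ia ir : R) : Prop :=
  0 < ia < x_a /\ 0 < ir < 1 - x_a.

Definition equilibrium (beta beta_a alpha x_a ia ir : R) : Prop :=
  in_Gamma x_a ia ir /\
  Fa beta beta_a alpha x_a ia ir = 0 /\ Fr beta beta_a alpha x_a ia ir = 0.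

Definition isolated_equilibrium (beta beta_a alpha x_a ia ir : R) : Prop :=
  equilibrium beta beta_a alpha x_a ia ir /\
  exists eps : R, 0 < eps /\
    forall ja jr : R, equilibrium beta beta_a alpha x_a ja jr ->
      Rabs (ja - ia) < eps -> Rabs (jr - ir) < eps ->
      ja = ia /\ jr = ir.

Definition lambda_plus (beta beta_a alpha x_a : R) : R :=
  beta - beta_a * x_a - alpha.

(* Write s = i_a + i_r for the total infected mass and
   g = beta (1 - s) - beta_a (x_a - i_a) - alpha for the per-capita growth rate.
   Then F_a + F_r = s g and F_a = beta (x_a s - i_a) + i_a g, so an equilibrium
   with s <> 0 lies on the ray i_a = x_a s, where g reduces to
   (1 - s) lambda_+ - s alpha.  Hence its mass solves the balance equation
   (1 - s) lambda_+ = s alpha, which has a solution in (0, 1] only when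
   lambda_+ > 0, and then exactly one, s = lambda_+ / (lambda_+ + alpha). *)

From Stdlib Require Import Reals Lra.
Open Scope R_scope.

Lemma balance_pos (l a s : R) :
  0 < a -> 0 < s <= 1 -> (1 - s) * l = s * a -> 0 < l /\ s < 1.
Proof.
  intros Ha Hs Hbal.
  assert (Hprod : 0 < (1 - s) * l) by (rewrite Hbal; nra).
  destruct (Rle_lt_dec l 0); nra.
Qed.

Lemma balance_solution (l a s : R) :
  0 < a -> (1 - s) * l = s * a -> s = l / (l + a).
Proof.
  intros Ha Hbal.
  assert (Hla : l + a <> 0) by (intro Hla; nra).
  apply (Rmult_eq_reg_r (l + a)); [|exact Hla].
  field_simplify; [lra | exact Hla].
Qed.

Section Equilibria.

Variables beta beta_a alpha x_a : R.

Local Notation F_a := (Fa beta beta_a alpha x_a).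
Local Notation F_r := (Fr beta beta_a alpha x_a).
Local Notation lambda := (lambda_plus beta beta_a alpha x_a).

Definition growth_rate (ia ir : R) : R :=
  beta * (1 - (ia + ir)) - beta_a * (x_a - ia) - alpha.

Definition endemic_mass : R := lambda / (lambda + alpha).

Lemma Fa_add_Fr (ia ir : R) :
  F_a ia ir + F_r ia ir = (ia + ir) * growth_rate ia ir.
Proof. unfold Fa, Fr, growth_rate; ring. Qed.

Lemma Fa_growth_rate (ia ir : R) :
  F_a ia ir = beta * (x_a * (ia + ir) - ia) + ia * growth_rate ia ir.
Proof. unfold Fa, growth_rate; ring. Qed.

Lemma growth_rate_on_ray (ia ir : R) :
  ia = x_a * (ia + ir) ->
  growth_rate ia ir = (1 - (ia + ir)) * lambda - (ia + ir) * alpha.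
Proof.
  intros Hray.
  transitivity (growth_rate ia ir - beta_a * (ia - x_a * (ia + ir))).
  - rewrite <- Hray; ring.
  - unfold growth_rate, lambda_plus; ring.
Qed.

Lemma Fa_Fr_eq0_iff (ia ir : R) :
  beta <> 0 -> ia + ir <> 0 ->
  (F_a ia ir = 0 /\ F_r ia ir = 0 <->
   ia = x_a * (ia + ir) /\ (1 - (ia + ir)) * lambda = (ia + ir) * alpha).
Proof.
  intros Hbeta Hmass.
  pose proof (Fa_add_Fr ia ir) as Hsum.
  pose proof (Fa_growth_rate ia ir) as HFa.
  split.
  - intros [HA HR].
    assert (Hg : growth_rate ia ir = 0).
    { assert (Hprod : (ia + ir) * growth_rate ia ir = 0) by lra.
      destruct (Rmult_integral _ _ Hprod); [contradiction | assumption]. }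
    assert (Hray : ia = x_a * (ia + ir)).
    { rewrite Hg, HA, Rmult_0_r, Rplus_0_r in HFa.
      destruct (Rmult_integral _ _ (eq_sym HFa)); [contradiction | lra]. }
    split; [exact Hray|].
    rewrite (growth_rate_on_ray _ _ Hray) in Hg; lra.
  - intros [Hray Hbal].
    assert (Hg : growth_rate ia ir = 0)
      by (rewrite (growth_rate_on_ray _ _ Hray); lra).
    assert (HA : F_a ia ir = 0)
      by (rewrite HFa, Hg, <- Hray; ring).
    split; [exact HA|].
    rewrite Hg, HA, Rmult_0_r in Hsum; lra.
Qed.

Hypothesis Hbeta : 0 < beta.
Hypothesis Halpha : 0 < alpha.

Lemma equilibrium_origin_of_lambda_nonpos (ia ir : R) :
  lambda <= 0 -> equilibrium beta beta_a alpha x_a ia ir -> ia = 0 /\ ir = 0.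
Proof.
  intros Hl [[Hia Hir] Heqs].
  destruct (Req_dec (ia + ir) 0) as [Hmass|Hmass]; [lra|].
  apply Fa_Fr_eq0_iff in Heqs as [_ Hbal]; [|lra|exact Hmass].
  destruct (balance_pos lambda alpha (ia + ir)); lra.
Qed.

Lemma isolated_equilibrium_origin :
  0 <= x_a <= 1 -> lambda <= 0 -> isolated_equilibrium beta beta_a alpha x_a 0 0.
Proof.
  intros Hxa Hl. split.
  - unfold equilibrium, in_Gamma, Fa, Fr. repeat split; lra.
  - exists 1. split; [lra|].
    intros ja jr Heq _ _.
    exact (equilibrium_origin_of_lambda_nonpos ja jr Hl Heq).
Qed.

Lemma interior_equilibrium_lambda_pos (ia ir : R) :
  in_interior x_a ia ir -> F_a ia ir = 0 -> F_r ia ir = 0 -> 0 < lambda.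
Proof.
  intros [Hia Hir] HA HR.
  destruct (proj1 (Fa_Fr_eq0_iff ia ir ltac:(lra) ltac:(lra)) (conj HA HR))
    as [_ Hbal].
  destruct (balance_pos lambda alpha (ia + ir)); lra.
Qed.

Lemma interior_equilibrium_endemic (ia ir : R) :
  in_interior x_a ia ir -> F_a ia ir = 0 -> F_r ia ir = 0 ->
  ia = x_a * endemic_mass /\ ir = (1 - x_a) * endemic_mass.
Proof.
  intros [Hia Hir] HA HR.
  destruct (proj1 (Fa_Fr_eq0_iff ia ir ltac:(lra) ltac:(lra)) (conj HA HR))
    as [Hray Hbal].
  pose proof (balance_solution _ _ _ Halpha Hbal) as Hmass.
  unfold endemic_mass. rewrite <- Hmass. lra.
Qed.

Lemma endemic_equilibrium :
  0 < x_a < 1 -> 0 < lambda ->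
  in_interior x_a (x_a * endemic_mass) ((1 - x_a) * endemic_mass) /\
  F_a (x_a * endemic_mass) ((1 - x_a) * endemic_mass) = 0 /\
  F_r (x_a * endemic_mass) ((1 - x_a) * endemic_mass) = 0.
Proof.
  intros Hxa Hl.
  assert (Hm : 0 < endemic_mass < 1).
  { assert (Hco : 1 - endemic_mass = alpha / (lambda + alpha))
      by (unfold endemic_mass; field; lra).
    assert (0 < alpha / (lambda + alpha)) by (apply Rdiv_lt_0_compat; lra).
    split; [unfold endemic_mass; apply Rdiv_lt_0_compat|]; lra. }
  assert (Hsum : x_a * endemic_mass + (1 - x_a) * endemic_mass = endemic_mass)
    by ring.
  split; [unfold in_interior; nra|].
  apply Fa_Fr_eq0_iff; rewrite ?Hsum; [lra | lra |].
  split; [reflexivity|].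
  unfold endemic_mass; field; lra.
Qed.

End Equilibria.

Theorem lemma3 (beta beta_a alpha x_a : R)
  (Hbeta : 0 < beta) (Hbeta_a : 0 < beta_a) (Halpha : 0 < alpha)
  (Hxa : 0 <= x_a <= 1) :
  (lambda_plus beta beta_a alpha x_a <= 0 ->
     isolated_equilibrium beta beta_a alpha x_a 0 0 /\
     (forall ia ir : R, isolated_equilibrium beta beta_a alpha x_a ia ir ->
        ia = 0 /\ ir = 0)) /\
  (0 < x_a < 1 ->
     ((exists ia ir : R, in_interior x_a ia ir /\
          Fa beta beta_a alpha x_a ia ir = 0 /\ Fr beta beta_a alpha x_a ia ir = 0 /\
          (forall ja jr : R, in_interior x_a ja jr ->
             Fa beta beta_a alpha x_a ja jr = 0 -> Fr beta beta_a alpha x_a ja jr = 0 ->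
             ja = ia /\ jr = ir))
      <-> 0 < lambda_plus beta beta_a alpha x_a)).
Proof.
  split.
  - intros Hl. split.
    + exact (isolated_equilibrium_origin _ _ _ _ Hbeta Halpha Hxa Hl).
    + intros ia ir [Heq _].
      exact (equilibrium_origin_of_lambda_nonpos _ _ _ _ Hbeta Halpha _ _ Hl Heq).
  - intros Hxa_open. split.
    + intros [ia [ir [Hint [HA [HR _]]]]].
      exact (interior_equilibrium_lambda_pos _ _ _ _ Hbeta Halpha _ _ Hint HA HR).
    + intros Hl.
      destruct (endemic_equilibrium _ _ _ _ Hbeta Halpha Hxa_open Hl)
        as [Hint [HA HR]].
      do 2 eexists. split; [exact Hint|]. split; [exact HA|]. split; [exact HR|].
      exact (interior_equilibrium_endemic _ _ _ _ Hbeta Halpha).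
Qed.
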